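(* For a positive integer $g$, let $t_g$ denote the number of numerical semigroups $\Lambda$ of genus $g$ satisfying $f(\Lambda)<3m(\Lambda)$. Then for every positive integer $g$, \[ t_g \geq F_{g+1} + \sum_{k = 1}^{\lfloor g/3\rfloor} \sum_{A \in \mathcal A_k} F_{g - |(A + A)\cap[0, k]| + |A| - k - 1}. \]
   Context: A numerical semigroup is a subset $\Lambda\subseteq\mathbb{N}_0$ closed under addition, containing $0$, with finite complement in $\mathbb{N}_0$. Its genus is $|\mathbb{N}_0\setminus\Lambda|$, its multiplicity $m(\Lambda)$ is its smallest nonzero element and its Frobenius number $f(\Lambda)$ is the largest element of $\mathbb{N}_0\setminus\Lambda$. For integers $a\le b$, $[a,b]=\{a,\dots,b\}$; $A+A=\{a_1+a_2:a_1,a_2\in A\}$. For a positive integer $k$, $\mathcal A_k = \{A \subseteq [0, k-1] : 0 \in A \text{ and } k \notin A + A\}$. $F_n$ are the Fibonacci numbers, $F_1=F_2=1$, $F_{n+2}=F_{n+1}+F_n$, with the convention $F_n=0$ for all $n\le 0$. *)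

From mathcomp Require Import all_boot all_order all_algebra.
Set Implicit Arguments. Unset Strict Implicit. Unset Printing Implicit Defensive.

Definition is_numsg (L : pred nat) : Prop :=
  [/\ L 0, (forall a b, L a -> L b -> L (a + b)) & (exists N, forall n, N <= n -> L n)].

Definition has_genus (L : pred nat) (g : nat) : Prop :=
  exists N, (forall n, N <= n -> L n) /\ count (fun n => ~~ L n) (iota 0 N) = g.

Definition is_multiplicity (L : pred nat) (m : nat) : Prop :=
  [/\ 0 < m, L m & forall n, 0 < n < m -> ~~ L n].

Definition is_frobenius (L : pred nat) (f : nat) : Prop :=
  ~~ L f /\ forall n, f < n -> L n.

Definition counted_sg (g : nat) (L : pred nat) : Prop :=
  is_numsg L /\ has_genus L g /\
  exists f m, [/\ is_frobenius L f, is_multiplicity L m & f < 3 * m].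

Fixpoint fib (n : nat) : nat :=
  match n with
  | 0 => 0
  | 1 => 1
  | (n'.+1 as p).+1 => fib p + fib n'
  end.

(* F_n for integer n, with F_n = 0 for n <= 0 *)
Definition fibz (z : int) : nat :=
  match z with
  | Posz n => fib n
  | Negz _ => 0
  end.

Definition in_sumset (k : nat) (A : {set 'I_k}) (n : nat) : bool :=
  [exists a in A, exists b in A, (val a + val b == n)].

Definition in_Ak (k : nat) (A : {set 'I_k}) : bool :=
  [exists i in A, val i == 0] && ~~ in_sumset A k.

Definition sumset_card_upto (k : nat) (A : {set 'I_k}) : nat :=
  count (in_sumset A) (iota 0 k.+1).

Definition rhs (g : nat) : nat :=
  fib g.+1 +
  \sum_(1 <= k < (g %/ 3).+1)
     \sum_(A : {set 'I_k} | in_Ak A)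
        fibz (g%:Z - (sumset_card_upto A)%:Z + #|A|%:Z - k%:Z - 1)%R.
Example fib_test : [:: fib 0; fib 1; fib 2; fib 3; fib 4; fib 5] = [:: 0;1;1;2;3;5]. Proof. by []. Qed.
Example fibz_neg : fibz (-3)%R = 0. Proof. by []. Qed.

From mathcomp Require Import all_boot all_order all_algebra zify.
Set Implicit Arguments. Unset Strict Implicit. Unset Printing Implicit Defensive.

(** A numerical semigroup with [f < 3m] is determined by the elements it has in
    [(m, 3m)], and we encode it by its membership bits on [[0, 3m)]. Two disjoint
    families are built. When [f < 2m] the semigroup is any subset of [(m, 2m)]
    together with [[2m, oo)]; reading its elements and gaps in [(m, 2m)] as parts 1
    and 2 gives the compositions of [g] into 1s and 2s, counted by [F_(g+1)].
    For [1 <= k <= g/3] and [A] in [A_k], take [m + A] as the part in [[m, m + k)],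
    the gaps [m + k] and [2m + k], all of [[2m + k + 1, 3m)], and [2m + (A + A)]:
    since [k] is not in [A + A], any choice of the remaining bits is closed under
    addition, and these choices are again compositions, now of
    [g - |(A + A) ∩ [0, k]| + |A| - k - 2]. The families are told apart by the
    last gap below [3m], which locates [k], and the [k] bits following [m]. *)

Lemma multiplicity_unique (L : pred nat) m m' :
  is_multiplicity L m -> is_multiplicity L m' -> m = m'.
Proof.
case=> m_gt0 Lm below_m [m'_gt0 Lm' below_m'].
apply/eqP; rewrite eqn_leq; apply/andP; split; rewrite leqNgt; apply/negP => lt_m.
- by move: (below_m m'); rewrite m'_gt0 lt_m Lm' => /(_ isT).
- by move: (below_m' m); rewrite m_gt0 lt_m Lm => /(_ isT).
Qed.

Lemma frobenius_exists (L : pred nat) N :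
  (forall n, N <= n -> L n) -> 0 < count (fun n => ~~ L n) (iota 0 N) ->
  exists2 f, is_frobenius L f & f < N.
Proof.
move=> cofinite; rewrite -has_count => /hasP [x _ gap_x].
have gap_lt n : ~~ L n -> n < N by move=> gap_n; rewrite ltnNge; exact: contra (cofinite n) gap_n.
have [f gap_f f_max] := @ex_maxnP (fun n => ~~ L n) N (ex_intro _ x gap_x)
  (fun n gap_n => ltnW (gap_lt n gap_n)).
exists f => //; last exact: gap_lt.
split=> // n lt_fn; apply: contraT => gap_n; have := f_max n gap_n; lia.
Qed.

Lemma count_negb_mkseq (f : pred nat) n :
  count negb (mkseq f n) = n - count f (iota 0 n).
Proof.
have count_id : count id (mkseq f n) = count f (iota 0 n) by rewrite count_map.
have count_split : count id (mkseq f n) + count negb (mkseq f n) = size (mkseq f n) :=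
  count_predC id (mkseq f n).
by rewrite size_mkseq count_id in count_split; lia.
Qed.

Lemma find_negb_nseq n : find negb (nseq n true) = n.
Proof. by elim: n => //= n ->. Qed.

Lemma uniq_flatten_map_key (I X K : eqType) (F : I -> seq X)
    (key_of : X -> K) (key : I -> K) (r : seq I) :
  uniq (map key r) -> {in r, forall i, uniq (F i)} ->
  {in r, forall i, {in F i, forall x, key_of x = key i}} -> uniq (flatten (map F r)).
Proof.
elim: r => //= i r IH /andP [key_i_notin uniq_keys] uniq_F keys_F.
rewrite cat_uniq uniq_F ?mem_head // IH //; last first.
- by move=> j j_r; apply: keys_F; rewrite inE j_r orbT.
- by move=> j j_r; apply: uniq_F; rewrite inE j_r orbT.
rewrite andbT; apply/hasPn => x /flattenP [_ /mapP [j j_r ->] x_Fj]; apply/negP => x_Fi.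
have j_ir : j \in i :: r by rewrite inE j_r orbT.
have := keys_F j j_ir x x_Fj.
rewrite (keys_F i (mem_head _ _) x x_Fi) => eq_key.
by move: key_i_notin; rewrite eq_key (map_f key j_r).
Qed.

Lemma size_flatten_map (I X : Type) (F : I -> seq X) (r : seq I) :
  size (flatten (map F r)) = \sum_(i <- r) size (F i).
Proof. by rewrite size_flatten /shape -map_comp sumnE big_map. Qed.

(** The membership bits on [[0, 3m)] of a set with multiplicity [m], to be read
    with default [true] beyond [3m]. *)
Definition sg_word (m : nat) (U V : seq bool) : seq bool :=
  true :: nseq m.-1 false ++ U ++ V.

Definition is_sg_word (s : seq bool) : Prop :=
  exists m U V, [/\ 0 < m, size U = m, size V = m, nth false U 0 & s = sg_word m U V].

(** For the words built below, [k] is the multiplicity minus one minus the length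
    of the final run of [true]s in the last third, and the [k] bits after the
    multiplicity are those of [A]; this key separates the two families and the
    different [(k, A)]. *)
Definition word_key (s : seq bool) : nat * seq bool :=
  let m := size s %/ 3 in
  let k := m.-1 - find negb (rev (drop (2 * m) s)) in
  (k, take k (drop m s)).

Section SgWord.
Variables (m : nat) (U V : seq bool).
Hypotheses (m_gt0 : 0 < m) (size_U : size U = m) (size_V : size V = m).
Local Notation L := (nth true (sg_word m U V)).

Lemma size_sg_word : size (sg_word m U V) = 3 * m.
Proof. by rewrite /= size_cat size_nseq size_cat size_U size_V; lia. Qed.

Lemma nth_sg_word n :
  L n = if n == 0 then true else if n < m then false
        else if n < 2 * m then nth false U (n - m)
        else if n < 3 * m then nth false V (n - 2 * m) else true.
Proof.
case: n => [|n] //=; rewrite nth_cat size_nseq.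
have [lt_nm|le_mn] := ltnP n m.-1; first by rewrite nth_nseq lt_nm ifT //; lia.
rewrite ifF; last by lia.
rewrite nth_cat size_U; have [lt_nU|le_Un] := ltnP (n - m.-1) m.
  by rewrite ifT; [rewrite (set_nth_default false); [congr nth|]|]; lia.
rewrite ifF; last by lia.
have [lt_nV|le_Vn] := ltnP n.+1 (3 * m).
  by rewrite (set_nth_default false); [congr nth|]; lia.
by rewrite nth_default //; lia.
Qed.

Lemma sg_word_below n : 0 < n -> n < m -> L n = false.
Proof. by move=> n_gt0 lt_nm; rewrite nth_sg_word ifF ?lt_nm //; lia. Qed.

Lemma sg_word_U n : m <= n -> n < 2 * m -> L n = nth false U (n - m).
Proof. by move=> le_mn lt_n2m; rewrite nth_sg_word lt_n2m !ifF //; lia. Qed.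

Lemma sg_word_V n : 2 * m <= n -> n < 3 * m -> L n = nth false V (n - 2 * m).
Proof. by move=> le_2mn lt_n3m; rewrite nth_sg_word lt_n3m !ifF //; lia. Qed.

Lemma sg_word_cofinite n : 3 * m <= n -> L n.
Proof. by move=> le_n; rewrite nth_sg_word !ifF //; lia. Qed.

Lemma count_gaps_sg_word :
  count (fun n => ~~ L n) (iota 0 (3 * m)) = m.-1 + count negb U + count negb V.
Proof.
have count_word : count negb (sg_word m U V) = m.-1 + count negb U + count negb V.
  by rewrite /= count_cat count_nseq count_cat /=; lia.
by rewrite -count_word -size_sg_word -{3}(mkseq_nth true (sg_word m U V)) count_map.
Qed.

Lemma word_key_sg_word :
  word_key (sg_word m U V) = (m.-1 - find negb (rev V), take (m.-1 - find negb (rev V)) U).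
Proof.
rewrite /word_key size_sg_word mulKn //.
have split_word : sg_word m U V = (true :: nseq m.-1 false) ++ U ++ V by [].
have size_prefix : size (true :: nseq m.-1 false) = m by rewrite /= size_nseq; lia.
have -> : drop (2 * m) (sg_word m U V) = V.
  by rewrite split_word catA drop_size_cat // size_cat size_prefix size_U; lia.
by rewrite split_word drop_size_cat // takel_cat // size_U; lia.
Qed.

Hypothesis U_0 : nth false U 0.

Lemma sg_word_multiplicity : is_multiplicity L m.
Proof.
split=> //; last by move=> n /andP [n_gt0 /(sg_word_below n_gt0) ->].
by rewrite sg_word_U ?subnn //; lia.
Qed.

Hypothesis sum_closed : forall i j, i + j < m ->
  nth false U i -> nth false U j -> nth false V (i + j).

Lemma sg_word_addr_closed a b : L a -> L b -> L (a + b).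
Proof.
have [-> //|a_gt0] := posnP a; have [->|b_gt0] := posnP b; first by rewrite addn0.
have [lt_am|le_ma] := ltnP a m; first by rewrite sg_word_below.
have [lt_bm|le_mb] := ltnP b m; first by rewrite (@sg_word_below b).
have [le_3m|lt_3m] := leqP (3 * m) (a + b); first by move=> _ _; exact: sg_word_cofinite.
rewrite (sg_word_U le_ma) ?(sg_word_U le_mb) ?sg_word_V; try lia.
move=> Ua Ub; have -> : a + b - 2 * m = a - m + (b - m) by lia.
by apply: sum_closed => //; lia.
Qed.

Lemma counted_sg_word g :
  m.-1 + count negb U + count negb V = g -> 0 < g -> counted_sg g L.
Proof.
move=> genus g_gt0.
have gaps := count_gaps_sg_word; rewrite genus in gaps.
have [f frob lt_f] : exists2 f, is_frobenius L f & f < 3 * m.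
  by apply: frobenius_exists; [exact: sg_word_cofinite|rewrite gaps].
split; first by split=> //; [exact: sg_word_addr_closed|exists (3 * m); exact: sg_word_cofinite].
split; first by exists (3 * m); split=> //; exact: sg_word_cofinite.
by exists f, m; split=> //; exact: sg_word_multiplicity.
Qed.
End SgWord.

Lemma sg_word_inj m m' U V U' V' :
  size U = m -> size V = m -> size U' = m' -> size V' = m' ->
  sg_word m U V = sg_word m' U' V' -> [/\ m = m', U = U' & V = V'].
Proof.
move=> size_U size_V size_U' size_V' /= [eq_words].
have eq_size := congr1 size eq_words.
rewrite !size_cat !size_nseq size_U size_V size_U' size_V' in eq_size.
have eq_m : m = m' by lia.
rewrite -{}eq_m in size_U' size_V' eq_words *.
move: eq_words => /eqP; rewrite eqseq_cat ?size_nseq // => /andP [_].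
by rewrite eqseq_cat ?size_U ?size_U' // => /andP [/eqP -> /eqP ->].
Qed.

Lemma sg_word_eq s s' : is_sg_word s -> is_sg_word s' ->
  (forall n, nth true s n = nth true s' n) -> s = s'.
Proof.
move=> [m [U [V [m_gt0 size_U size_V U_0 ->]]]].
move=> [m' [U' [V' [m'_gt0 size_U' size_V' U'_0 ->]]]] same.
have mult := sg_word_multiplicity m_gt0 size_U size_V U_0.
have [_ L_m' below_m'] := sg_word_multiplicity m'_gt0 size_U' size_V' U'_0.
have eq_m : m = m'.
  apply: (multiplicity_unique mult); split; rewrite ?same //.
  by move=> n /below_m'; rewrite same.
apply: (@eq_from_nth _ true) => [|n _]; last exact: same.
by rewrite (size_sg_word m_gt0 size_U size_V) (size_sg_word m'_gt0 size_U' size_V') eq_m.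
Qed.

Lemma sg_word_neq s s' : is_sg_word s -> is_sg_word s' -> s != s' ->
  exists n, nth true s n != nth true s' n.
Proof.
move=> word_s word_s' neq_ss'.
pose agree n := nth true s n == nth true s' n.
have [/allP agree_below|] := boolP (all agree (iota 0 (size s + size s'))).
  suff same : forall n, nth true s n = nth true s' n.
    by rewrite (sg_word_eq word_s word_s' same) eqxx in neq_ss'.
  move=> n; have [lt_n|le_n] := ltnP n (size s + size s'); last by rewrite !nth_default //; lia.
  by apply/eqP/agree_below; rewrite mem_iota.
by rewrite -has_predC => /hasP [n _ differ]; exists n.
Qed.

(** Compositions of [n] into parts 1 ([true]) and 2 ([false]). *)
Fixpoint fib_words (n : nat) : seq (seq bool) :=
  match n with
  | 0 => [:: [::]]
  | 1 => [:: [:: true]]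
  | (n'.+1 as p).+1 => map (cons true) (fib_words p) ++ map (cons false) (fib_words n')
  end.

Lemma fib_wordsSS n : fib_words n.+2 =
  map (cons true) (fib_words n.+1) ++ map (cons false) (fib_words n).
Proof. by []. Qed.

Lemma size_fib_words n : size (fib_words n) = fib n.+1.
Proof.
elim/ltn_ind: n => -[|[|n]] IH //.
by rewrite fib_wordsSS size_cat !size_map !IH.
Qed.

Lemma fib_words_uniq n : uniq (fib_words n).
Proof.
elim/ltn_ind: n => -[|[|n]] IH //.
rewrite fib_wordsSS cat_uniq !map_inj_uniq ?IH //; try by move=> x y [].
rewrite andbT; apply/hasPn => _ /mapP [x _ ->]; by apply/mapP => -[y].
Qed.

Lemma fib_words_weight n (w : seq bool) :
  w \in fib_words n -> size w + count negb w = n.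
Proof.
elim/ltn_ind: n w => -[|[|n]] IH w; try by rewrite inE => /eqP ->.
rewrite fib_wordsSS mem_cat => /orP [] /mapP [v v_in ->] /=.
- by rewrite -(IH n.+1 (ltnSn _) v v_in) addSn add0n.
- by rewrite -(IH n (ltnW (ltnSn _)) v v_in) addSn add1n addnS.
Qed.

Section SetBits.
Variables (k : nat) (A : {set 'I_k}).

Definition in_natset (i : nat) : bool := [exists x in A, val x == i].
Definition set_bits : seq bool := mkseq in_natset k.
Definition sumset_bits : seq bool := mkseq (in_sumset A) k.
Definition sumset_holes : nat := count negb sumset_bits.

Lemma in_natset_ord (x : 'I_k) : in_natset x = (x \in A).
Proof.
apply/existsP/idP => [[y /andP [yA /eqP eq_yx]]|xA]; first by rewrite -(val_inj eq_yx).
by exists x; rewrite xA eqxx.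
Qed.

Lemma count_negb_set_bits : count negb set_bits = k - #|A|.
Proof.
have count_A : count in_natset (iota 0 k) = #|A|.
  by rewrite -val_enum_ord count_map (eq_count in_natset_ord) enumT cardE /enum_mem size_filter.
by rewrite count_negb_mkseq count_A.
Qed.

Lemma in_sumsetD i j : in_natset i -> in_natset j -> in_sumset A (i + j).
Proof.
move=> /existsP [x /andP [xA /eqP <-]] /existsP [y /andP [yA /eqP <-]].
by apply/existsP; exists x; rewrite xA; apply/existsP; exists y; rewrite yA eqxx.
Qed.

Lemma in_sumset0 : in_Ak A -> in_sumset A 0.
Proof.
case/andP=> /existsP [x /andP [xA /eqP x0]] _.
by apply/existsP; exists x; rewrite xA; apply/existsP; exists x; rewrite xA x0.
Qed.

Lemma card_Ak_gt0 : in_Ak A -> 0 < #|A|.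
Proof. by case/andP=> /existsP [x /andP [xA _]] _; apply/card_gt0P; exists x. Qed.

Lemma sumset_holes_lt : 0 < k -> in_Ak A -> sumset_holes < k.
Proof.
move=> k_gt0 /in_sumset0 sum0; rewrite /sumset_holes count_negb_mkseq.
suff : 0 < count (in_sumset A) (iota 0 k) by lia.
by rewrite -has_count; apply/hasP; exists 0; rewrite ?mem_iota.
Qed.

Lemma sumset_card_upto_holes : in_Ak A -> sumset_card_upto A + sumset_holes = k.
Proof.
case/andP=> _ sum_k; rewrite /sumset_card_upto /sumset_holes count_negb_mkseq.
rewrite -addn1 iotaD count_cat /= (negbTE sum_k) addn0.
have := count_size (in_sumset A) (iota 0 k); rewrite size_iota; lia.
Qed.
End SetBits.

Lemma set_bits_inj k : injective (@set_bits k).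
Proof.
move=> A A' eq_bits; apply/setP => x.
have := congr1 (nth false ^~ x) eq_bits.
by rewrite !nth_mkseq // !in_natset_ord.
Qed.

Fixpoint fill_holes (p ys : seq bool) : seq bool :=
  if p is b :: p' then
    if b then true :: fill_holes p' ys else head true ys :: fill_holes p' (behead ys)
  else [::].

Lemma size_fill_holes p ys : size (fill_holes p ys) = size p.
Proof. by elim: p ys => //= b p IH ys; case: b => /=; rewrite IH. Qed.

Lemma count_negb_fill_holes p ys : size ys = count negb p ->
  count negb (fill_holes p ys) = count negb ys.
Proof.
elim: p ys => [|[] p IH] [|y ys] //= size_ys; rewrite IH //; lia.
Qed.

Lemma fill_holes_true p ys i : nth false p i -> nth false (fill_holes p ys) i.
Proof. by elim: p ys i => [|[] p IH] ys [|i] //=; apply: IH. Qed.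

Lemma fill_holes_inj p ys ys' : size ys = count negb p -> size ys' = count negb p ->
  fill_holes p ys = fill_holes p ys' -> ys = ys'.
Proof.
elim: p ys ys' => [|b p IH] ys ys' /=; first by case: ys; case: ys'.
case: b => /=; first by move=> size_ys size_ys' [/(IH _ _ size_ys size_ys')].
case: ys ys' => [|y ys] [|y' ys'] //= [size_ys] [size_ys'] [eq_y].
by move=> /(IH _ _ size_ys size_ys') ->; rewrite eq_y.
Qed.

(** The semigroups with [f < 2m]: [m = size w + 1], and the gaps in [(m, 2m)]
    are the [false] bits of [w]. *)
Definition comp_word (w : seq bool) : seq bool :=
  sg_word (size w).+1 (true :: w) (nseq (size w).+1 true).

Lemma comp_word_sg w : is_sg_word (comp_word w).
Proof. by exists (size w).+1, (true :: w), (nseq (size w).+1 true); rewrite size_nseq. Qed.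

Lemma word_key_comp_word w : word_key (comp_word w) = (0, [::]).
Proof.
rewrite word_key_sg_word ?size_nseq // rev_nseq find_negb_nseq.
by have -> : (size w).+1.-1 - (size w).+1 = 0 by lia.
Qed.

Lemma comp_word_counted g (w : seq bool) :
  w \in fib_words g -> 0 < g -> counted_sg g (nth true (comp_word w)).
Proof.
move=> /fib_words_weight weight g_gt0.
apply: counted_sg_word; rewrite ?size_nseq //.
- by move=> i j lt_ij _ _; rewrite nth_nseq lt_ij.
- by rewrite /= count_nseq /= add0n mul0n !addn0.
Qed.

Lemma comp_word_inj : injective comp_word.
Proof.
by move=> w w' /sg_word_inj [] //=; rewrite ?size_nseq // => _ [].
Qed.

(** With [d] the number of holes of [A + A] in [[0, k)] and [n = size w - d],
    [set_word A w] has multiplicity [m = k + n + 1]: [m + A] is its part of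
    [[m, m + k)], [m + k] and [2m + k] are gaps, [[2m + k + 1, 3m)] lies in the
    semigroup, [2m + (A + A)] is forced in, and the bits of [w] decide the holes of
    [2m + (A + A)] in [[2m, 2m + k)] (first [d] bits) and [[m + k + 1, 2m)] (the rest). *)
Definition set_word k (A : {set 'I_k}) (w : seq bool) : seq bool :=
  sg_word (k + (size w - sumset_holes A)).+1
    (set_bits A ++ false :: drop (sumset_holes A) w)
    (fill_holes (sumset_bits A) (take (sumset_holes A) w)
       ++ false :: nseq (size w - sumset_holes A) true).

Section SetWord.
Variables (k : nat) (A : {set 'I_k}) (w : seq bool).

Local Notation d := (sumset_holes A).
Local Notation n := (size w - sumset_holes A).
Local Notation U := (set_bits A ++ false :: drop d w).
Local Notation V := (fill_holes (sumset_bits A) (take d w) ++ false :: nseq n true).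

Lemma size_set_word_U : size U = (k + n).+1.
Proof. by rewrite size_cat size_mkseq /= size_drop; lia. Qed.

Lemma size_set_word_V : size V = (k + n).+1.
Proof. by rewrite size_cat size_fill_holes size_mkseq /= size_nseq; lia. Qed.

Hypotheses (k_gt0 : 0 < k) (A_in : in_Ak A) (holes_le : sumset_holes A <= size w).

Lemma set_word_U_0 : nth false U 0.
Proof. by rewrite nth_cat size_mkseq k_gt0 nth_mkseq //; case/andP: A_in. Qed.

Lemma set_word_sg : is_sg_word (set_word A w).
Proof.
exists (k + n).+1, U, V; split=> //.
- exact: size_set_word_U.
- exact: size_set_word_V.
- exact: set_word_U_0.
Qed.

Lemma word_key_set_word : word_key (set_word A w) = (k, set_bits A).
Proof.
rewrite word_key_sg_word //; [|exact: size_set_word_U|exact: size_set_word_V].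
rewrite rev_cat rev_cons rev_nseq -cats1 -catA find_cat has_nseq /= size_nseq andbF addn0.
have -> : (k + n).+1.-1 - n = k by lia.
by rewrite take_size_cat // size_mkseq.
Qed.

Lemma set_word_U_low i : i <= k -> nth false U i = (i < k) && in_natset A i.
Proof.
move=> le_ik; rewrite nth_cat size_mkseq.
have [lt_ik|le_ki] := ltnP i k; first by rewrite nth_mkseq.
have -> : i = k by lia.
by rewrite subnn.
Qed.

Lemma set_word_V_high i : k < i -> i <= k + n -> nth false V i.
Proof.
move=> lt_ki le_i; rewrite nth_cat size_fill_holes size_mkseq ltnNge ltnW //=.
have -> : i - k = (i - k).-1.+1 by lia.
by rewrite /= nth_nseq; case: ifP => //; lia.
Qed.

Lemma set_word_sum_closed i j : i + j < (k + n).+1 ->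
  nth false U i -> nth false U j -> nth false V (i + j).
Proof.
move=> lt_ij; have [lt_kij|le_ijk] := ltnP k (i + j).
  by move=> _ _; apply: set_word_V_high; lia.
rewrite !set_word_U_low; try lia.
move=> /andP [lt_ik Ai] /andP [lt_jk Aj]; have sum_ij := in_sumsetD Ai Aj.
have lt_ijk : i + j < k.
  by rewrite ltn_neqAle le_ijk andbT; apply: contraTneq sum_ij => ->; case/andP: A_in.
by rewrite nth_cat size_fill_holes size_mkseq lt_ijk; apply: fill_holes_true; rewrite nth_mkseq.
Qed.

Lemma count_negb_set_word :
  (k + n).+1.-1 + count negb U + count negb V = k + n + (k - #|A|) + 2 + count negb w.
Proof.
rewrite !count_cat count_negb_set_bits /= count_nseq /= count_negb_fill_holes; last first.
  by rewrite size_take -/(sumset_holes A); case: ifP => //; lia.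
have split_w : count negb w = count negb (take d w) + count negb (drop d w).
  by rewrite -count_cat cat_take_drop.
rewrite split_w; set c := k - #|A|; lia.
Qed.

Lemma set_word_counted g : k + n + (k - #|A|) + 2 + count negb w = g -> 0 < g ->
  counted_sg g (nth true (set_word A w)).
Proof.
move=> genus g_gt0; apply: counted_sg_word => //.
- exact: size_set_word_U.
- exact: size_set_word_V.
- exact: set_word_U_0.
- exact: set_word_sum_closed.
- by rewrite count_negb_set_word.
Qed.
End SetWord.

Lemma set_word_inj k (A : {set 'I_k}) (w w' : seq bool) :
  sumset_holes A <= size w -> sumset_holes A <= size w' ->
  set_word A w = set_word A w' -> w = w'.
Proof.
move=> holes_le holes_le' eq_words.
have [_] := sg_word_inj (size_set_word_U A w) (size_set_word_V A w)
  (size_set_word_U A w') (size_set_word_V A w') eq_words.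
move=> /eqP; rewrite eqseq_cat ?size_mkseq // => /andP [_ /eqP [eq_drop]].
move=> /eqP; rewrite eqseq_cat ?size_fill_holes // => /andP [/eqP eq_take _].
have size_take_holes (v : seq bool) :
    sumset_holes A <= size v -> size (take (sumset_holes A) v) = sumset_holes A.
  by move=> le_v; rewrite size_takel.
have {}eq_take :=
  fill_holes_inj (size_take_holes w holes_le) (size_take_holes w' holes_le') eq_take.
by rewrite -(cat_take_drop (sumset_holes A) w) eq_take eq_drop cat_take_drop.
Qed.

(** Chosen so that [set_word A w] has genus [g] when [w] has weight
    [set_word_len g A]. *)
Definition set_word_len g k (A : {set 'I_k}) : nat := g + #|A| - 2 * k - 2 + sumset_holes A.

Lemma fib_words_set_word g k (A : {set 'I_k}) (w : seq bool) :
  0 < k -> 3 * k <= g -> in_Ak A -> w \in fib_words (set_word_len g A) ->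
  sumset_holes A <= size w /\ counted_sg g (nth true (set_word A w)).
Proof.
move=> k_gt0 le_3kg A_in /fib_words_weight weight.
have holes_lt := sumset_holes_lt k_gt0 A_in; have card_gt0 := card_Ak_gt0 A_in.
have card_le : #|A| <= k by rewrite -[k in _ <= k]card_ord max_card.
have count_le := count_size negb w.
move: weight; rewrite /set_word_len; set d := sumset_holes A => weight.
have holes_le : d <= size w by lia.
split=> //; apply: set_word_counted => //; lia.
Qed.

Definition Ak_sets k : seq {set 'I_k} := [seq A <- index_enum {set 'I_k} | in_Ak A].

Definition set_words_of g k (A : {set 'I_k}) : seq (seq bool) :=
  map (set_word A) (fib_words (set_word_len g A)).

Definition set_words g : seq (seq bool) :=
  flatten [seq flatten [seq set_words_of g A | A <- Ak_sets k]
          | k <- index_iota 1 (g %/ 3).+1].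

Definition candidate_words g : seq (seq bool) := map comp_word (fib_words g) ++ set_words g.

Lemma mem_set_words g s : s \in set_words g ->
  exists k (A : {set 'I_k}) w, [/\ 0 < k, 3 * k <= g, in_Ak A,
    w \in fib_words (set_word_len g A) & s = set_word A w].
Proof.
move=> /flattenP [_ /mapP [k k_in ->]] /flattenP [_ /mapP [A A_in ->]] /mapP [w w_in ->].
move: k_in A_in; rewrite mem_index_iota mem_filter => /andP [k_gt0 lt_k] /andP [A_Ak _].
by exists k, A, w; split=> //; lia.
Qed.

Section SetWordsOf.
Variables (g k : nat) (A : {set 'I_k}).
Hypotheses (k_gt0 : 0 < k) (le_3kg : 3 * k <= g) (A_in : in_Ak A).

Lemma set_words_of_uniq : uniq (set_words_of g A).
Proof.
rewrite map_inj_in_uniq ?fib_words_uniq // => w w' w_in w'_in.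
apply: set_word_inj.
- by have [] := fib_words_set_word k_gt0 le_3kg A_in w_in.
- by have [] := fib_words_set_word k_gt0 le_3kg A_in w'_in.
Qed.

Lemma word_key_set_words_of s : s \in set_words_of g A -> word_key s = (k, set_bits A).
Proof.
move=> /mapP [w w_in ->]; have [holes_le _] := fib_words_set_word k_gt0 le_3kg A_in w_in.
exact: word_key_set_word.
Qed.

Lemma size_set_words_of :
  size (set_words_of g A) = fibz (g%:Z - (sumset_card_upto A)%:Z + #|A|%:Z - k%:Z - 1)%R.
Proof.
rewrite size_map size_fib_words.
have holes := sumset_card_upto_holes A_in; have card_gt0 := card_Ak_gt0 A_in.
suff -> : (g%:Z - (sumset_card_upto A)%:Z + #|A|%:Z - k%:Z - 1)%R = (set_word_len g A).+1 by [].
rewrite /set_word_len; lia.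
Qed.
End SetWordsOf.

Lemma set_words_uniq g : uniq (set_words g).
Proof.
apply: (uniq_flatten_map_key (key_of := fun s => (word_key s).1) (key := id)).
- by rewrite map_id iota_uniq.
- move=> k; rewrite mem_index_iota => /andP [k_gt0 lt_k]; have le_3kg : 3 * k <= g by lia.
  apply: (uniq_flatten_map_key (key_of := fun s => (word_key s).2) (key := @set_bits k)).
  + by rewrite map_inj_uniq ?filter_uniq ?index_enum_uniq //; exact: set_bits_inj.
  + by move=> A; rewrite mem_filter => /andP [A_in _]; exact: set_words_of_uniq.
  + move=> A; rewrite mem_filter => /andP [A_in _] s s_in.
    by rewrite (word_key_set_words_of k_gt0 le_3kg A_in s_in).
- move=> k; rewrite mem_index_iota => /andP [k_gt0 lt_k] s; have le_3kg : 3 * k <= g by lia.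
  move=> /flattenP [_ /mapP [A A_Ak ->] s_in]; move: A_Ak.
  rewrite mem_filter => /andP [A_in _].
  by rewrite (word_key_set_words_of k_gt0 le_3kg A_in s_in).
Qed.

Lemma candidate_words_uniq g : uniq (candidate_words g).
Proof.
rewrite cat_uniq set_words_uniq map_inj_uniq ?fib_words_uniq ?andbT //; last exact: comp_word_inj.
apply/hasPn => s /mem_set_words [k [A [w [k_gt0 le_3kg A_in w_in ->]]]].
have [holes_le _] := fib_words_set_word k_gt0 le_3kg A_in w_in.
apply/mapP => -[w' _ /(congr1 word_key)].
by rewrite word_key_comp_word word_key_set_word // => -[k0 _]; rewrite k0 in k_gt0.
Qed.

Lemma candidate_words_counted g s : 0 < g -> s \in candidate_words g ->
  is_sg_word s /\ counted_sg g (nth true s).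
Proof.
move=> g_gt0; rewrite mem_cat => /orP [/mapP [w w_in ->]|/mem_set_words].
  by split; [exact: comp_word_sg|exact: comp_word_counted].
move=> [k [A [w [k_gt0 le_3kg A_in w_in ->]]]].
have [holes_le counted] := fib_words_set_word k_gt0 le_3kg A_in w_in.
by split=> //; exact: set_word_sg.
Qed.

Lemma size_candidate_words g : size (candidate_words g) = rhs g.
Proof.
rewrite size_cat size_map size_fib_words /rhs; congr (_ + _).
rewrite size_flatten_map big_seq [RHS]big_seq; apply: eq_bigr => k.
rewrite mem_index_iota => /andP [k_gt0 lt_k]; have le_3kg : 3 * k <= g by lia.
rewrite size_flatten_map big_filter; apply: eq_bigr => A A_in.
exact: size_set_words_of.
Qed.

Theorem lemma3p6 (g : nat) (hg : 0 < g) :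
  exists s : seq (pred nat),
    [/\ rhs g <= size s,
        (forall i, i < size s -> counted_sg g (nth (fun _ : nat => false) s i)) &
        (forall i j, i < size s -> j < size s -> i <> j ->
           exists n, nth (fun _ : nat => false) s i n != nth (fun _ : nat => false) s j n)].
Proof.
exists (map (fun s => nth true s : pred nat) (candidate_words g)).
rewrite size_map; split=> [|i lt_i|i j lt_i lt_j neq_ij]; first by rewrite size_candidate_words.
  by rewrite (nth_map [::]) //; case: (candidate_words_counted hg (mem_nth [::] lt_i)).
rewrite !(nth_map [::]) //; apply: sg_word_neq.
- by case: (candidate_words_counted hg (mem_nth [::] lt_i)).
- by case: (candidate_words_counted hg (mem_nth [::] lt_j)).
- by rewrite nth_uniq ?candidate_words_uniq //; apply/eqP.
Qed.
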